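(* Let $T$ be a balanced tree with a proper 2-coloring $\chi:V\to\{\mathcal{R},\mathcal{B}\}$ in which all leaves are blue. If there is a support vertex $s\in V_1$ with $|N(s)\cap V_2|\ge 2$, then $T$ has two minimal RD-sets of different sizes, and hence $T$ is mixed.
   Context: $N(v)=\{u:uv\in E\}$, $N(D)=\bigcup_{v\in D}N(v)$. A leaf is a vertex of degree 1; a support vertex is a vertex adjacent to a leaf. The height of a vertex is its minimum distance to a leaf; $V_k$ is the set of vertices of height $k$; $T$ is balanced if no two adjacent vertices have the same height. An RD-set is $D\subseteq V$ with $N(D)=\chi^{-1}(\mathcal{R})$, minimal if no proper subset is an RD-set. A TD-set is $D$ with $N(D)=V$, minimal if no proper subset is a TD-set; $T$ is mixed if not all minimal TD-sets have the same size. *)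

From mathcomp Require Import all_boot.
Set Implicit Arguments. Unset Strict Implicit. Unset Printing Implicit Defensive.

(* Colours: chi : T -> bool with
   chi v = true meaning v is Red (R) and false meaning Blue (B). *)

Section Graphs.
Variables (T : finType) (e : rel T).

Definition simple_graph := symmetric e /\ irreflexive e.

(* the set of (ordered) adjacent pairs: twice the number of edges *)
Definition darts : {set T * T} := [set p | e p.1 p.2].

Definition is_tree :=
  [/\ simple_graph, 0 < #|T|, (forall x y, connect e x y)
    & #|darts| = 2 * (#|T| - 1)].

Definition nbhd (v : T) : {set T} := [set u | e v u].
Definition nbhdS (D : {set T}) : {set T} := \bigcup_(v in D) nbhd v.

Definition leaf (v : T) := #|nbhd v| == 1.
Definition support_vertex (v : T) := [exists l, leaf l && e v l].

Definition walkn (n : nat) (x y : T) :=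
  [exists p : n.-tuple T, path e x p && (last x p == y)].

(* graph distance (= #|T| if unreachable) *)
Definition dist (x y : T) : nat := find (fun n => walkn n x y) (iota 0 #|T|).

Definition height (v : T) : nat := \big[minn/#|T|]_(l | leaf l) dist v l.

Definition Vk (k : nat) : {set T} := [set v | height v == k].

Definition balanced := forall u v, e u v -> height u != height v.

Definition proper_2coloring (chi : T -> bool) := forall u v, e u v -> chi u != chi v.

Definition is_RD (chi : T -> bool) (D : {set T}) := nbhdS D == [set v | chi v].
Definition minimal_RD (chi : T -> bool) (D : {set T}) := minset (is_RD chi) D.

Definition is_TD (D : {set T}) := nbhdS D == setT.
Definition minimal_TD (D : {set T}) := minset is_TD D.

Definition mixed :=
  exists D1 D2, [/\ minimal_TD D1, minimal_TD D2 & #|D1| != #|D2|].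

End Graphs.

From mathcomp Require Import all_boot order.
Import Order.TTheory.
Set Implicit Arguments. Unset Strict Implicit. Unset Printing Implicit Defensive.

(* Let l be a leaf at the red vertex s and a != b two non-leaf (blue) neighbours
   of s.  Minimal RD-sets are exactly the sets of blue vertices dominating the
   red ones in which every vertex has a private red neighbour.  The red vertices
   other than s split into those in the component of a in T - s and the others;
   no vertex is adjacent to both parts, so irredundant dominators of the two
   parts combine, and their union is a minimal RD-set once s is dominated.
   As T has no 4-cycle and red vertices are not leaves, the first part has an
   irredundant dominator A0 avoiding N(s) and one, A, containing a; likewise B0
   and B (containing b) for the second part.  Among the minimal RD-sets
   A ∪ B, A0 ∪ B, A ∪ B0 and {l} ∪ A0 ∪ B0, the last two differ in size if
   |A| = |A0|, and the first two otherwise.  Adding a fixed minimal set of red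
   vertices dominating the blue ones turns these into minimal TD-sets. *)

Section Walks.
Variables (T : finType) (e : rel T).

Lemma walknP n x y :
  reflect (exists p : seq T, [/\ size p = n, path e x p & last x p = y])
          (walkn e n x y).
Proof.
apply: (iffP existsP) => [[p /andP[pp /eqP lp]] | [p [sp pp lp]]].
  by exists (val p); rewrite size_tuple.
have sp' : size p == n by rewrite sp.
by exists (Tuple sp'); rewrite /= pp lp eqxx.
Qed.

Lemma dist_leq n x y : n < #|T| -> walkn e n x y -> dist e x y <= n.
Proof.
move=> n_lt walk_n; rewrite /dist; case: leqP => // lt_n.
by have := before_find 0 lt_n; rewrite nth_iota // add0n walk_n.
Qed.

Lemma walkn_dist x y :
  connect e x y -> dist e x y < #|T| /\ walkn e (dist e x y) x y.
Proof.
case/connectP => p pp ->; case: (shortenP pp) => p' pp' uniq_p' _.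
have size_p' : size p' < #|T|.
  by move/card_uniqP: uniq_p' => /= <-; exact: max_card.
have has_walk : has (fun n => walkn e n x (last x p')) (iota 0 #|T|).
  apply/hasP; exists (size p'); first by rewrite mem_iota.
  by apply/walknP; exists p'.
have := nth_find 0 has_walk; rewrite has_find size_iota in has_walk.
by rewrite nth_iota // add0n /dist => ->.
Qed.

Lemma height_leaf v : leaf e v -> height e v = 0.
Proof.
move=> leaf_v; apply/eqP; rewrite -leqn0.
have dist_vv : dist e v v = 0.
  have : 0 < #|T| by apply/card_gt0P; exists v.
  rewrite /dist; case: #|T| => [|n] //= _.
  by have -> : walkn e 0 v v by apply/walknP; exists [::].
by have := bigmin_le_cond #|T| (dist e v) leaf_v; rewrite minEnat dist_vv.
Qed.

End Walks.

Section Connected.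
Variables (T : finType) (e : rel T).
Hypothesis connected : forall x y, connect e x y.

Lemma connected_nbr (x y v : T) : x != y -> exists w, e v w.
Proof.
move=> xy; have [z vz conn_vz] : exists2 z, v != z & connect e v z.
  by case: (eqVneq v x) => [->|vx]; [exists y | exists x].
case/connectP: conn_vz => -[|w p] /= pp zE; first by rewrite zE eqxx in vz.
by case/andP: pp => vw _; exists w.
Qed.

Hypothesis esym : symmetric e.

Lemma card_darts_connected : 2 * (#|T| - 1) <= #|darts e|.
Proof.
have [r _ | T0] := pickP (predT : pred T); last by rewrite (eq_card0 T0).
pose d x := dist e x r.
have nearer x : x != r -> exists y, e x y && (d y < d x).
  move=> xr; have [lt_d] := walkn_dist (connected x r).
  case/walknP => [[|y p] [size_p /= pp lp]]; first by rewrite -lp eqxx in xr.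
  case/andP: pp => exy pp; exists y; rewrite exy /d -size_p in lt_d *.
  by apply: dist_leq (ltnW lt_d) _; apply/walknP; exists p.
pose par x := odflt x [pick y | e x y && (d y < d x)].
have parP x : x != r -> e x (par x) && (d (par x) < d x).
  move=> xr; rewrite /par; case: pickP => [y //|none].
  by have [y] := nearer x xr; rewrite none.
pose up := [set (x, par x) | x in [set~ r]].
pose down := [set (par x, x) | x in [set~ r]].
have card_up : #|up| = #|T| - 1 by rewrite card_imset ?cardsC1 ?subn1 // => x y [].
have card_down : #|down| = #|T| - 1 by rewrite card_imset ?cardsC1 ?subn1 // => x y [].
have up_down0 : up :&: down = set0.
  apply/setP => -[x y]; rewrite !inE; apply/negP => /andP[].
  case/imsetP => x' /[!inE] x'r [-> ->]; case/imsetP => y' /[!inE] y'r [xE yE].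
  have /andP[_] := parP x' x'r; have /andP[_] := parP y' y'r.
  by rewrite -xE yE => lt1 lt2; move: (ltn_trans lt1 lt2); rewrite ltnn.
have : up :|: down \subset darts e.
  apply/subsetP => p /setUP[] /imsetP[x /[!inE] xr ->];
    by have /andP[exp _] := parP x xr; rewrite /= ?exp // esym.
by move/subset_leq_card; rewrite cardsU up_down0 cards0 subn0 card_up card_down addnn -mul2n.
Qed.

End Connected.

Section Domination.
Variables (T : finType) (e : rel T).

Lemma in_nbhd v x : (x \in nbhd e v) = e v x.
Proof. by rewrite inE. Qed.

Lemma nbhdSP (D : {set T}) x :
  reflect (exists2 w, w \in D & e w x) (x \in nbhdS e D).
Proof.
apply: (iffP bigcupP) => [[w wD]|[w wD ewx]]; first by rewrite in_nbhd; exists w.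
by exists w; rewrite ?in_nbhd.
Qed.

Lemma nbhdS_subset (A B : {set T}) : A \subset B -> nbhdS e A \subset nbhdS e B.
Proof.
move=> sAB; apply/subsetP => x /nbhdSP[w wA ewx].
by apply/nbhdSP; exists w; first exact: (subsetP sAB).
Qed.

Lemma exists_nbr_neq v q : 1 < #|nbhd e v| -> exists2 w, e v w & w != q.
Proof.
case/card_gt1P => x [y [/[!in_nbhd] evx evy xy]].
by case: (eqVneq x q) => [<-|]; [exists y => //; rewrite eq_sym | exists x].
Qed.

Definition private_nbr (D : {set T}) v x :=
  e v x /\ forall w, w \in D -> e w x -> w = v.

Definition irredundant_cover (X D : {set T}) :=
  X \subset nbhdS e D /\ forall v, v \in D -> exists2 x, x \in X & private_nbr D v x.

Lemma private_nbr_setD1 (X D : {set T}) v :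
  X \subset nbhdS e D -> v \in D -> ~~ (X \subset nbhdS e (D :\ v)) ->
  exists2 x, x \in X & private_nbr D v x.
Proof.
move=> XD vD /subsetPn[x xX /nbhdSP no_w]; exists x => //.
have [w wD ewx] := nbhdSP _ _ (subsetP XD x xX).
have other w' : w' \in D -> e w' x -> w' = v.
  move=> w'D ew'x; case: (eqVneq w' v) => // w'v; case: no_w.
  by exists w'; rewrite // !inE w'v.
by split=> //; rewrite -(other w wD ewx).
Qed.

Lemma minimal_dominatingP (X D : {set T}) :
  minset (fun B => nbhdS e B == X) D <-> nbhdS e D = X /\ irredundant_cover X D.
Proof.
split=> [/minsetP[/eqP DX minD] | [DX [_ priv]]].
  split=> //; split; first by rewrite DX.
  move=> v vD; have XD : X \subset nbhdS e D by rewrite DX.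
  apply: (private_nbr_setD1 XD vD); apply/negP => XDv.
  have DvX : nbhdS e (D :\ v) = X.
    by apply/eqP; rewrite eqEsubset XDv -DX nbhdS_subset ?subsetDl.
  by have /setP/(_ v) := minD _ (introT eqP DvX) (subsetDl _ _); rewrite !inE eqxx vD.
apply/minsetP; split=> [|B /eqP BX sBD]; first exact/eqP.
apply/eqP; rewrite eqEsubset sBD; apply/subsetP => v vD.
have [x xX [evx xpriv]] := priv v vD.
have /nbhdSP[w wB ewx] : x \in nbhdS e B by rewrite BX.
by rewrite -(xpriv w (subsetP sBD w wB) ewx).
Qed.

Lemma exists_irredundant_cover (X W : {set T}) :
  X \subset nbhdS e W -> exists2 D : {set T}, D \subset W & irredundant_cover X D.
Proof.
move=> XW; pose P (B : {set T}) := X \subset nbhdS e B.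
have [D minD sDW] := minset_exists (P := P) XW.
exists D => //; have XD := minsetp minD; split=> // v vD.
apply: (private_nbr_setD1 XD vD); apply/negP => XDv.
by have /setP/(_ v) := minsetinf minD XDv (subsetDl _ _); rewrite !inE eqxx vD.
Qed.

Lemma private_nbr_setU (D D' X : {set T}) v x :
  private_nbr D v x -> x \in X -> [disjoint nbhdS e D' & X] ->
  private_nbr (D :|: D') v x.
Proof.
move=> [evx xpriv] xX D'X; split=> // w /setUP[wD|wD'] ewx; first exact: xpriv.
by have /nbhdSP := disjointFl D'X xX; case; exists w.
Qed.

Lemma irredundant_coverU (X1 X2 D1 D2 : {set T}) :
  irredundant_cover X1 D1 -> irredundant_cover X2 D2 ->
  [disjoint nbhdS e D1 & X2] -> [disjoint nbhdS e D2 & X1] ->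
  irredundant_cover (X1 :|: X2) (D1 :|: D2).
Proof.
move=> [X1D1 priv1] [X2D2 priv2] D1X2 D2X1.
split=> [|v /setUP[vD1|vD2]]; first by rewrite /nbhdS bigcup_setU setUSS.
  have [x xX1 px] := priv1 v vD1.
  by exists x; [rewrite inE xX1 | exact: private_nbr_setU px xX1 D2X1].
have [x xX2 px] := priv2 v vD2.
by exists x; [rewrite inE xX2 orbT | rewrite setUC; exact: private_nbr_setU px xX2 D1X2].
Qed.

Lemma card_irredundant_coverU (X1 D1 D2 : {set T}) :
  irredundant_cover X1 D1 -> [disjoint nbhdS e D2 & X1] ->
  #|D1 :|: D2| = #|D1| + #|D2|.
Proof.
move=> [_ priv1] D2X1; rewrite cardsU; suff -> : D1 :&: D2 = set0 by rewrite cards0 subn0.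
apply/setP => v; rewrite !inE; apply/negP => /andP[vD1 vD2].
have [x xX1 [evx _]] := priv1 v vD1.
by have /nbhdSP := disjointFl D2X1 xX1; case; exists v.
Qed.

End Domination.

Section Colouring.
Variables (T : finType) (e : rel T) (chi : T -> bool).
Hypothesis proper : proper_2coloring e chi.

Lemma proper_nbr_colour u v : e u v -> chi v = ~~ chi u.
Proof. by move/proper; case: (chi u); case: (chi v). Qed.

Lemma minimal_RD_of_cover (X D : {set T}) :
  X \subset [set v | chi v] -> irredundant_cover e X D ->
  [set v | chi v] \subset nbhdS e D -> minimal_RD e chi D.
Proof.
move=> Xred [_ priv] red_D.
have D_red : nbhdS e D \subset [set v | chi v].
  apply/subsetP => x /nbhdSP[w wD ewx]; have [y /(subsetP Xred) yred [ewy _]] := priv w wD.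
  by move: yred; rewrite !inE (proper_nbr_colour ewx) (proper_nbr_colour ewy); case: (chi w).
have DE : nbhdS e D = [set v | chi v] by apply/eqP; rewrite eqEsubset D_red red_D.
apply/minimal_dominatingP; split=> //; split; first by rewrite DE.
by move=> v vD; have [x xX px] := priv v vD; exists x => //; exact: (subsetP Xred).
Qed.

Lemma mixed_of_minimal_RD (D1 D2 : {set T}) :
  (forall v, exists w, e w v) ->
  minimal_RD e chi D1 -> minimal_RD e chi D2 -> #|D1| != #|D2| -> mixed e.
Proof.
move=> nbr minD1 minD2 D12; pose red := [set v | chi v].
have [E Ered coverE] : exists2 E : {set T}, E \subset red & irredundant_cover e (~: red) E.
  apply: exists_irredundant_cover; apply/subsetP => v; rewrite !inE => blue_v.
  have [w ewv] := nbr v; apply/nbhdSP; exists w => //.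
  by move: blue_v; rewrite inE (proper_nbr_colour ewv); case: (chi w).
have E_blue : [disjoint nbhdS e E & red].
  rewrite disjoints_subset; apply/subsetP => x /nbhdSP[w /(subsetP Ered)].
  by rewrite !inE => red_w /proper_nbr_colour ->; rewrite red_w.
have minTD D : minimal_RD e chi D -> minimal_TD e (D :|: E) /\ #|D :|: E| = #|D| + #|E|.
  case/minimal_dominatingP => DE coverD.
  have D_red : [disjoint nbhdS e D & ~: red] by rewrite DE disjoints_subset setCK.
  have := irredundant_coverU coverD coverE D_red E_blue; rewrite setUCr => cover.
  split; last exact: card_irredundant_coverU coverD E_blue.
  apply/minimal_dominatingP; split=> //; apply/eqP; rewrite eqEsubset subsetT; exact: cover.1.
have [TD1 card1] := minTD D1 minD1; have [TD2 card2] := minTD D2 minD2.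
by exists (D1 :|: E), (D2 :|: E); rewrite card1 card2 eqn_add2r.
Qed.

End Colouring.

Definition remove_edge (T : eqType) (e : rel T) (u v : T) : rel T :=
  [rel x y | e x y && ~~ ((x == u) && (y == v) || (x == v) && (y == u))].

Lemma remove_edge_avoid (T : eqType) (e : rel T) u v x y :
  e x y -> (x != u) && (y != u) || (x != v) && (y != v) -> remove_edge e u v x y.
Proof.
move=> exy; rewrite /remove_edge /= exy.
by case: (x == u); case: (y == v); case: (x == v); case: (y == u).
Qed.

Section Tree.
Variables (T : finType) (e : rel T).
Hypothesis tree : is_tree e.

Lemma tree_sym : symmetric e. Proof. by case: tree => -[]. Qed.

Lemma tree_connected x y : connect e x y. Proof. by case: tree. Qed.

Lemma edge_neq u v : e u v -> u != v.
Proof. by case: tree => -[_ eirr] _ _ _; apply: contraTneq => ->; rewrite eirr. Qed.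

Lemma tree_nbr x y v : e x y -> exists w, e w v.
Proof.
move=> exy; have [w evw] := connected_nbr tree_connected v (edge_neq exy).
by exists w; rewrite tree_sym.
Qed.

Lemma nonleaf_two_nbrs x y v : e x y -> ~~ leaf e v -> 1 < #|nbhd e v|.
Proof.
move=> exy; rewrite /leaf => nonleaf_v; have [w ewv] := tree_nbr v exy.
have : 0 < #|nbhd e v| by apply/card_gt0P; exists w; rewrite in_nbhd tree_sym.
by move: nonleaf_v; case: #|nbhd e v| => [|[|k]].
Qed.

Lemma remove_edge_disconnects u v : e u v -> ~~ connect (remove_edge e u v) u v.
Proof.
move=> euv; apply/negP => conn_uv; set f := remove_edge e u v.
have fsym : symmetric f.
  move=> x y; rewrite /f /remove_edge /= tree_sym.
  by case: (x == u); case: (y == v); case: (x == v); case: (y == u).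
have fconn x y : connect f x y.
  apply: (connect_sub _ (tree_connected x y)) => z w ezw.
  case: (boolP ((z == u) && (w == v) || (z == v) && (w == u))) =>
      [/orP[/andP[/eqP-> /eqP->] | /andP[/eqP-> /eqP->]] | not_uv].
  - exact: conn_uv.
  - by rewrite (sym_connect_sym fsym).
  - by apply: connect1; rewrite /f /remove_edge /= ezw not_uv.
have darts_f : darts f = darts e :\ (u, v) :\ (v, u).
  apply/setP => -[x y]; rewrite !inE /f /remove_edge /= !xpair_eqE.
  by case: (x == u); case: (y == v); case: (x == v); case: (y == u); case: (e x y).
have card_uv := cardsD1 (u, v) (darts e).
have card_vu := cardsD1 (v, u) (darts e :\ (u, v)).
rewrite !inE /= euv tree_sym euv xpair_eqE (negbTE (edge_neq euv)) andbF /=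
  in card_uv card_vu.
case: tree => _ _ _ card_darts; have := card_darts_connected fconn fsym.
by rewrite darts_f -card_darts card_uv card_vu !add1n ltnNge leqnSn.
Qed.

Lemma common_nbrs_eq p q x y : p != q -> e p x -> e q x -> e p y -> e q y -> x = y.
Proof.
move=> pq epx eqx epy eqy; case: (eqVneq x y) => // xy.
case/negP: (remove_edge_disconnects epx); apply: (connect_trans (y := y)).
  apply/connect1/remove_edge_avoid => //; apply/orP; right.
  by rewrite (edge_neq epx) eq_sym xy.
apply: (connect_trans (y := q)).
  apply/connect1/remove_edge_avoid; first by rewrite tree_sym.
  by apply/orP; right; rewrite eq_sym xy (edge_neq eqx).
apply/connect1/remove_edge_avoid => //; apply/orP; left.
by rewrite eq_sym pq eq_sym (edge_neq epx).
Qed.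

Lemma exists_nbr_nonadjacent r q : 1 < #|nbhd e r| -> r != q -> exists2 w, e r w & ~~ e q w.
Proof.
case/card_gt1P => x [y [/[!in_nbhd] erx ery xy]] rq.
case eqx: (e q x); last by exists x; rewrite ?eqx.
case eqy: (e q y); last by exists y; rewrite ?eqy.
by case/eqP: xy; exact: common_nbrs_eq rq erx eqx ery eqy.
Qed.

Lemma exists_cover_avoiding q (X : {set T}) :
  {in X, forall r, 1 < #|nbhd e r|} -> q \notin X ->
  exists2 D, irredundant_cover e X D & [disjoint D & nbhd e q].
Proof.
move=> two_nbrs qX.
have XW : X \subset nbhdS e (~: nbhd e q).
  apply/subsetP => r rX; have rq : r != q by apply: contraNneq qX => <-.
  have [w erw eqw] := exists_nbr_nonadjacent (two_nbrs r rX) rq.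
  by apply/nbhdSP; exists w; rewrite ?inE ?in_nbhd // tree_sym.
by have [D sD coverD] := exists_irredundant_cover XW; exists D; rewrite ?disjoints_subset.
Qed.

Lemma exists_cover_through c x (X : {set T}) :
  {in X, forall r, 1 < #|nbhd e r|} -> x \in X -> e c x ->
  exists2 D, irredundant_cover e X D & c \in D.
Proof.
move=> two_nbrs xX ecx.
have XW : X \subset nbhdS e (c |: ~: nbhd e x).
  apply/subsetP => r rX; apply/nbhdSP; case: (eqVneq r x) => [->|rx].
    by exists c; rewrite ?setU11.
  have [w erw exw] := exists_nbr_nonadjacent (two_nbrs r rX) rx.
  by exists w; rewrite ?in_setU1 ?in_setC ?in_nbhd ?exw ?orbT // tree_sym.
have [D sD [XD priv]] := exists_irredundant_cover XW; exists D => //.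
have /nbhdSP[w wD ewx] := subsetP XD x xX.
move/subsetP/(_ w wD): sD; rewrite in_setU1 in_setC in_nbhd tree_sym ewx orbF.
by move/eqP <-.
Qed.

End Tree.

Section SupportVertex.
Variables (T : finType) (e : rel T) (chi : T -> bool).
Hypotheses (tree : is_tree e) (proper : proper_2coloring e chi)
  (leaf_blue : forall v, leaf e v -> chi v = false).
Variables (s l a b : T).
Hypotheses (esl : e s l) (leaf_l : leaf e l) (esa : e s a) (esb : e s b) (ab : a != b)
  (nonleaf_a : ~~ leaf e a) (nonleaf_b : ~~ leaf e b).

Let esym := tree_sym tree.

Lemma s_red : chi s.
Proof. by rewrite (proper_nbr_colour proper (_ : e l s)) ?leaf_blue // esym. Qed.

Lemma blue_of_nbr_s v : e s v -> chi v = false.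
Proof. by move/(proper_nbr_colour proper) ->; rewrite s_red. Qed.

Local Notation off_s := [rel x y | e x y && (x != s) && (y != s)].
Local Notation side := (connect off_s a).

Lemma side_edge u w : e u w -> u != s -> w != s -> side u = side w.
Proof.
move=> euw us ws; apply/idP/idP => conn; apply: (connect_trans conn).
  by apply: connect1; rewrite /= euw us ws.
by apply: connect1; rewrite /= esym euw us ws.
Qed.

Lemma s_notin_side : ~~ side s.
Proof.
apply/negP => /connectP[p]; elim/last_ind: p => [|p z _] /=.
  by move=> _ sa; move: (edge_neq tree esa); rewrite -sa eqxx.
rewrite rcons_path last_rcons => /andP[_ /andP[_ zs]] sz.
by rewrite -sz eqxx in zs.
Qed.

Lemma b_notin_side : ~~ side b.
Proof.
apply/negP => conn_ab; have eas : e a s by rewrite esym.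
case/negP: (remove_edge_disconnects tree eas).
apply: (connect_trans (y := b)).
  apply: connect_sub conn_ab => x y /andP[/andP[exy xs] ys]; apply: connect1.
  by apply: remove_edge_avoid exy _; rewrite xs ys orbT.
apply/connect1/remove_edge_avoid; first by rewrite esym.
by rewrite eq_sym ab (edge_neq tree esa).
Qed.

Local Notation Rin := [set r | chi r & side r].
Local Notation Rout := ([set r | chi r & ~~ side r] :\ s).

Lemma RinUout : Rin :|: Rout = [set v | chi v] :\ s.
Proof.
apply/setP => v; rewrite !inE; case: (eqVneq v s) => [->|_] /=.
  by rewrite (negbTE s_notin_side) andbF.
by case: (chi v); case: (side v).
Qed.

Lemma Rin_sub : Rin \subset [set v | chi v] :\ s.
Proof. by rewrite -RinUout subsetUl. Qed.

Lemma Rout_sub : Rout \subset [set v | chi v] :\ s.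
Proof. by rewrite -RinUout subsetUr. Qed.

Lemma two_nbrs_of_red (X : {set T}) :
  X \subset [set v | chi v] :\ s -> {in X, forall r, 1 < #|nbhd e r|}.
Proof.
move=> Xred r /(subsetP Xred); rewrite !inE => /andP[_ red_r].
by apply: (nonleaf_two_nbrs tree esl); apply: contraL red_r => /leaf_blue ->.
Qed.

Lemma cover_nbr_side (X D : {set T}) v u :
  X \subset [set v | chi v] :\ s -> irredundant_cover e X D -> v \in D -> e v u -> u != s ->
  exists2 x, x \in X & side u = side x.
Proof.
move=> Xred [_ priv] vD evu us; have [x xX [evx _]] := priv v vD.
move/subsetP/(_ x xX): Xred; rewrite !inE => /andP[xs red_x].
have vs : v != s.
  by apply: contraTneq red_x => vs; rewrite (proper_nbr_colour proper evx) vs s_red.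
by exists x => //; rewrite -(side_edge evu vs us) (side_edge evx vs xs).
Qed.

Lemma nbhdS_Rin_cover (D : {set T}) : irredundant_cover e Rin D -> [disjoint nbhdS e D & Rout].
Proof.
move=> coverD; rewrite disjoints_subset; apply/subsetP => u /nbhdSP[v vD evu].
rewrite !inE; apply/negP => /andP[us /andP[_ u_out]].
have [x /[!inE] /andP[_ x_in] side_ux] := cover_nbr_side Rin_sub coverD vD evu us.
by rewrite side_ux x_in in u_out.
Qed.

Lemma nbhdS_Rout_cover (D : {set T}) : irredundant_cover e Rout D -> [disjoint nbhdS e D & Rin].
Proof.
move=> coverD; rewrite disjoints_subset; apply/subsetP => u /nbhdSP[v vD evu].
rewrite !inE; apply/negP => /andP[_ u_in].
have us : u != s by apply: contraTneq u_in => ->; exact: s_notin_side.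
have [x /[!inE] /andP[_ /andP[_ x_out]] side_ux] := cover_nbr_side Rout_sub coverD vD evu us.
by rewrite side_ux (negbTE x_out) in u_in.
Qed.

Lemma minimal_RD_join (A B : {set T}) :
  irredundant_cover e Rin A -> irredundant_cover e Rout B -> s \in nbhdS e (A :|: B) ->
  minimal_RD e chi (A :|: B) /\ #|A :|: B| = #|A| + #|B|.
Proof.
move=> coverA coverB s_AB; have AB := nbhdS_Rin_cover coverA.
have BA := nbhdS_Rout_cover coverB.
split; last exact: card_irredundant_coverU coverA BA.
have := irredundant_coverU coverA coverB AB BA; rewrite RinUout => coverAB.
have red_AB : [set v | chi v] \subset nbhdS e (A :|: B).
  apply/subsetP => v /[!inE] red_v; case: (eqVneq v s) => [-> //|vs].
  by apply: (subsetP coverAB.1); rewrite !inE vs.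
exact: (minimal_RD_of_cover proper (subD1set _ s) coverAB red_AB).
Qed.

Lemma minimal_RD_leaf_join (A B : {set T}) :
  irredundant_cover e Rin A -> irredundant_cover e Rout B ->
  [disjoint A & nbhd e s] -> [disjoint B & nbhd e s] ->
  minimal_RD e chi (l |: (A :|: B)) /\ #|l |: (A :|: B)| = (#|A| + #|B|).+1.
Proof.
move=> coverA coverB As Bs.
have := irredundant_coverU coverA coverB (nbhdS_Rin_cover coverA) (nbhdS_Rout_cover coverB).
rewrite RinUout => coverAB.
have nbhd_l : nbhd e l = [set s].
  case/cards1P: leaf_l => x lx; suff sx : s = x by rewrite sx.
  by apply/set1P; rewrite -lx in_nbhd esym.
have nbhdS_l : nbhdS e [set l] = [set s] by rewrite /nbhdS big_set1.
have cover_l : irredundant_cover e [set s] [set l].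
  split=> [|v /set1P ->]; first by rewrite nbhdS_l.
  by exists s; rewrite ?set11 //; split=> [|w /set1P ->]; rewrite // esym.
have l_AB : [disjoint nbhdS e [set l] & [set v | chi v] :\ s].
  by rewrite nbhdS_l disjoints1 !inE eqxx.
have AB_s : [disjoint nbhdS e (A :|: B) & [set s]].
  rewrite disjoint_sym disjoints1; apply/nbhdSP => -[w /setUP[wA|wB] ews].
    by have := disjointFr As wA; rewrite in_nbhd esym ews.
  by have := disjointFr Bs wB; rewrite in_nbhd esym ews.
split; last by rewrite (card_irredundant_coverU cover_l AB_s) cards1
  (card_irredundant_coverU coverA (nbhdS_Rout_cover coverB)).
have := irredundant_coverU cover_l coverAB l_AB AB_s.
rewrite setD1K ?inE ?s_red // => cover.
exact: (minimal_RD_of_cover proper (subxx _) cover cover.1).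
Qed.

Lemma minimal_RD_sizes_differ :
  exists D1 D2, [/\ minimal_RD e chi D1, minimal_RD e chi D2 & #|D1| != #|D2|].
Proof.
have [ra ara ras] := exists_nbr_neq s (nonleaf_two_nbrs tree esl nonleaf_a).
have [rb brb rbs] := exists_nbr_neq s (nonleaf_two_nbrs tree esl nonleaf_b).
have as_ : a != s by rewrite eq_sym (edge_neq tree esa).
have bs : b != s by rewrite eq_sym (edge_neq tree esb).
have ra_in : ra \in Rin.
  rewrite !inE -(side_edge ara as_ ras) connect0 (proper_nbr_colour proper ara).
  by rewrite (blue_of_nbr_s esa).
have rb_out : rb \in Rout.
  rewrite !inE rbs (proper_nbr_colour proper brb) (blue_of_nbr_s esb) /=.
  by rewrite -(side_edge brb bs rbs) b_notin_side.
have s_Rin : s \notin Rin by rewrite !inE (negbTE s_notin_side) andbF.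
have s_Rout : s \notin Rout by rewrite !inE eqxx.
have [A0 coverA0 A0s] := exists_cover_avoiding tree (two_nbrs_of_red Rin_sub) s_Rin.
have [B0 coverB0 B0s] := exists_cover_avoiding tree (two_nbrs_of_red Rout_sub) s_Rout.
have [A coverA aA] := exists_cover_through tree (two_nbrs_of_red Rin_sub) ra_in ara.
have [B coverB bB] := exists_cover_through tree (two_nbrs_of_red Rout_sub) rb_out brb.
have s_nbr (D : {set T}) v : v \in D -> e s v -> s \in nbhdS e D.
  by move=> vD esv; apply/nbhdSP; exists v; rewrite // esym.
have [A_A0 | A_A0] := eqVneq #|A| #|A0|.
  have s_AB0 : s \in nbhdS e (A :|: B0) by apply: (s_nbr _ a) esa; rewrite inE aA.
  have [minAB0 cardAB0] := minimal_RD_join coverA coverB0 s_AB0.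
  have [minlA0B0 cardlA0B0] := minimal_RD_leaf_join coverA0 coverB0 A0s B0s.
  by exists (A :|: B0), (l |: (A0 :|: B0)); rewrite cardAB0 cardlA0B0 A_A0 ltn_eqF.
have s_AB : s \in nbhdS e (A :|: B) by apply: (s_nbr _ a) esa; rewrite inE aA.
have s_A0B : s \in nbhdS e (A0 :|: B) by apply: (s_nbr _ b) esb; rewrite inE bB orbT.
have [minAB cardAB] := minimal_RD_join coverA coverB s_AB.
have [minA0B cardA0B] := minimal_RD_join coverA0 coverB s_A0B.
by exists (A :|: B), (A0 :|: B); rewrite cardAB cardA0B eqn_add2r.
Qed.

End SupportVertex.

Theorem theorem3p35 (T : finType) (e : rel T) (chi : T -> bool) :
  is_tree e ->
  balanced e ->
  proper_2coloring e chi ->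
  (forall v, leaf e v -> chi v = false) ->
  (exists s, [/\ s \in Vk e 1, support_vertex e s
                & 2 <= #|nbhd e s :&: Vk e 2|]) ->
  (exists D1 D2, [/\ minimal_RD e chi D1, minimal_RD e chi D2 & #|D1| != #|D2|])
  /\ mixed e.
Proof.
move=> tree _ proper leaf_blue [s [_ /existsP[l /andP[leaf_l esl]] two_in_V2]].
have [a [b [/setIP[/[!in_nbhd] esa aV2] /setIP[/[!in_nbhd] esb bV2] ab]]] := card_gt1P two_in_V2.
have nonleaf v : v \in Vk e 2 -> ~~ leaf e v.
  by rewrite inE => /eqP height_v; apply/negP => /height_leaf; rewrite height_v.
have RD := minimal_RD_sizes_differ tree proper leaf_blue esl leaf_l esa esb ab
  (nonleaf a aV2) (nonleaf b bV2).
split=> //; have [D1 [D2 [minD1 minD2 D12]]] := RD.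
exact: (mixed_of_minimal_RD proper (fun v => tree_nbr tree v esl) minD1 minD2 D12).
Qed.
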